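(* Let $A,B,C$ be smooth functions on $[0,1]$ and consider the Abel equation $$\frac{dx}{dt}=A(t)x^3+B(t)x^2+C(t)x,\qquad t\in[0,1].$$ Assume that $\int_0^1C(t)\,dt=0$ and that there exist real numbers $a,b$ such that the function $$aA(t)\exp\left(\int_0^tC(s)\,ds\right)+bB(t)$$ does not vanish identically and does not change sign on $[0,1]$. Then the equation has at most one non-zero periodic orbit, and when this periodic orbit exists it is hyperbolic.
   Context: A periodic orbit is a solution $x(t)$ defined on all of $[0,1]$ with $x(0)=x(1)$; $x\equiv0$ is always one, and non-zero periodic orbits are the others. The Poincaré map is $\Pi(x_0)=x(1;x_0)$ where $x(t;x_0)$ is the solution with $x(0;x_0)=x_0$; a periodic orbit with initial condition $x_0$ is hyperbolic if $\Pi'(x_0)\ne1$. *)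

From Stdlib Require Import Reals Lra ClassicalEpsilon.
From Coquelicot Require Import Coquelicot.
Open Scope R_scope.

Definition smooth (f : R -> R) : Prop := forall (n : nat) (t : R), ex_derive_n f n t.

Definition is_sol (A B C : R -> R) (x : R -> R) : Prop :=
  forall t, 0 <= t <= 1 ->
    is_derive x t (A t * x t ^ 3 + B t * x t ^ 2 + C t * x t).

Definition periodic_orbit (A B C : R -> R) (x : R -> R) : Prop :=
  is_sol A B C x /\ x 0 = x 1.

Definition nonzero_on01 (x : R -> R) : Prop :=
  exists t, 0 <= t <= 1 /\ x t <> 0.

(* Poincare map Pi(x0) = x(1; x0); (junk value 0 when the solution with
   x(0) = x0 does not exist on [0,1]). *)
Definition poincare (A B C : R -> R) (x0 : R) : R :=
  match excluded_middle_informative (exists x, is_sol A B C x /\ x 0 = x0) with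
  | left H => (proj1_sig (constructive_indefinite_description _ H)) 1
  | right _ => 0
  end.

Definition hyperbolic (A B C : R -> R) (x0 : R) : Prop :=
  exists d, is_derive (poincare A B C) x0 d /\ d <> 1.

From Stdlib Require Import Reals Lra Lia ClassicalEpsilon.
From Coquelicot Require Import Coquelicot.
Open Scope R_scope.

(* With I t = RInt C 0 t, the substitution x = y e^I turns the equation into
   y' = A' y^3 + B' y^2 with A' = A e^(2I), B' = B e^I; since I 1 = 0 it maps periodic
   orbits to periodic orbits, and P = a A' + b B' = e^I (a A e^I + b B) is of one sign
   and not identically zero.  A non-zero periodic orbit y of the reduced equation never
   vanishes, and integrating over a period the derivatives of log|y|, 1/y, 1/y^2 and
   log|Q|, where Q = a - b y, gives
     RInt (A' y^2 + B' y) = RInt (A' y + B') = RInt (A' + B'/y) = RInt (A' y^2 - P y^2/Q) = 0.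
   Q has no zero because it solves the linear equation Q' = A' y^2 Q - y^2 P, whose
   forcing term has one sign.  Hence the exponent of the Poincare map,
   RInt (3 A x^2 + 2 B x + C) = RInt (3 A' y^2 + 2 B' y) = RInt (P y^2/Q), is not 0.
   Two distinct orbits would give RInt (P w) = 0 for a w without zeros, namely
   w = 1/y1 - 1/y2 if a = 0 and w = y1/Q1 - y2/Q2 otherwise.  Differentiability of the
   Poincare map comes from solving the equation, truncated away from a given orbit,
   by Picard iteration. *)

(** * Continuity and integrals on [0, 1] *)

Definition sign_constant_on01 (f : R -> R) : Prop :=
  (forall t, 0 <= t <= 1 -> 0 <= f t) \/ (forall t, 0 <= t <= 1 -> f t <= 0).

Lemma Rmin_Rmax_01 a b t :
  0 <= a <= 1 -> 0 <= b <= 1 -> Rmin a b <= t <= Rmax a b -> 0 <= t <= 1.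
Proof. unfold Rmin, Rmax; destruct Rle_dec; lra. Qed.

Lemma continuous_Rplus (f g : R -> R) x :
  continuous f x -> continuous g x -> continuous (fun y => f y + g y) x.
Proof. exact (continuous_plus f g x). Qed.

Lemma continuous_Rminus (f g : R -> R) x :
  continuous f x -> continuous g x -> continuous (fun y => f y - g y) x.
Proof. exact (continuous_minus f g x). Qed.

Lemma continuous_Rmult (f g : R -> R) x :
  continuous f x -> continuous g x -> continuous (fun y => f y * g y) x.
Proof. exact (continuous_mult f g x). Qed.

Lemma continuous_Ropp (f : R -> R) x : continuous f x -> continuous (fun y => - f y) x.
Proof. exact (continuous_opp f x). Qed.

Lemma continuous_Rpow (f : R -> R) n x : continuous f x -> continuous (fun y => f y ^ n) x.
Proof.
  intros Hf; induction n as [|n IH]; simpl.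
  - apply continuous_const.
  - now apply continuous_Rmult.
Qed.

Lemma continuous_Rdiv (f g : R -> R) x :
  continuous f x -> continuous g x -> g x <> 0 -> continuous (fun y => f y / g y) x.
Proof. intros Hf Hg Hx. apply continuous_Rmult; [|apply continuous_Rinv_comp]; auto. Qed.

Lemma continuous_Rabs_comp (f : R -> R) x : continuous f x -> continuous (fun y => Rabs (f y)) x.
Proof.
  intros Hf. apply continuous_comp; auto.
  apply continuity_pt_filterlim, Rcontinuity_abs.
Qed.

Ltac continuity_R :=
  repeat match goal with
  | |- continuous (fun _ => ?c) _ => apply continuous_const
  | |- continuous (fun x => x) _ => apply continuous_id
  | |- continuous (fun x => @?f x + @?g x) _ => apply (continuous_Rplus f g)
  | |- continuous (fun x => @?f x - @?g x) _ => apply (continuous_Rminus f g)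
  | |- continuous (fun x => @?f x * @?g x) _ => apply (continuous_Rmult f g)
  | |- continuous (fun x => @?f x / @?g x) _ => apply (continuous_Rdiv f g)
  | |- continuous (fun x => - @?f x) _ => apply (continuous_Ropp f)
  | |- continuous (fun x => / @?f x) _ => apply (continuous_Rinv_comp f)
  | |- continuous (fun x => @?f x ^ _) _ => apply (continuous_Rpow f)
  | |- continuous (fun x => exp (@?f x)) _ => apply (continuous_exp_comp f)
  | |- continuous (fun x => Rabs (@?f x)) _ => apply (continuous_Rabs_comp f)
  end;
  auto.

Lemma continuity_pt_continuous (f : R -> R) x : continuous f x -> continuity_pt f x.
Proof. apply continuity_pt_filterlim. Qed.

Lemma continuous_of_lipschitz (f : R -> R) (c t : R) :
  (forall s, Rabs (f s - f t) <= c * Rabs (s - t)) -> continuous f t.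
Proof.
  intros Hf. apply continuity_pt_filterlim. intros eps Heps.
  assert (Hc : 0 < Rabs c + 1) by (pose proof (Rabs_pos c); lra).
  exists (eps / (Rabs c + 1)). split; [apply Rdiv_lt_0_compat; lra|].
  intros s [_ Hs]. simpl in *. unfold R_dist in *.
  apply Rle_lt_trans with ((Rabs c + 1) * Rabs (s - t)).
  - eapply Rle_trans; [apply Hf|]. apply Rmult_le_compat_r; [apply Rabs_pos|].
    pose proof (RRle_abs c); lra.
  - apply Rmult_lt_reg_l with (/ (Rabs c + 1)); [apply Rinv_0_lt_compat; lra|].
    rewrite <- Rmult_assoc, Rinv_l by lra. unfold Rdiv in Hs. lra.
Qed.

Definition clamp (lo hi z : R) : R := Rmin hi (Rmax lo z).

Lemma clamp_id lo hi z : lo <= z <= hi -> clamp lo hi z = z.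
Proof. unfold clamp, Rmin, Rmax; repeat destruct Rle_dec; lra. Qed.

Lemma clamp_bounds lo hi z : lo <= hi -> lo <= clamp lo hi z <= hi.
Proof. unfold clamp, Rmin, Rmax; repeat destruct Rle_dec; lra. Qed.

Lemma clamp_lipschitz lo hi z1 z2 : Rabs (clamp lo hi z1 - clamp lo hi z2) <= Rabs (z1 - z2).
Proof. unfold clamp, Rmin, Rmax; repeat destruct Rle_dec; split_Rabs; lra. Qed.

Lemma continuous_clamp lo hi z : continuous (clamp lo hi) z.
Proof. apply continuous_of_lipschitz with 1. intros s. rewrite Rmult_1_l. apply clamp_lipschitz. Qed.

Lemma Rabs_clamp_le K z : 0 <= K -> Rabs (clamp (- K) K z) <= K.
Proof. intros HK. pose proof (clamp_bounds (- K) K z). split_Rabs; lra. Qed.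

Lemma ex_RInt_continuous_R (f : R -> R) a b :
  (forall t, Rmin a b <= t <= Rmax a b -> continuous f t) -> ex_RInt f a b.
Proof. exact (ex_RInt_continuous f a b). Qed.

Lemma ex_RInt_on01 (f : R -> R) a b : 0 <= a <= 1 -> 0 <= b <= 1 ->
  (forall t, 0 <= t <= 1 -> continuous f t) -> ex_RInt f a b.
Proof. intros Ha Hb Hf. apply ex_RInt_continuous_R. intros t Ht. apply Hf, (Rmin_Rmax_01 a b); auto. Qed.

(* Coquelicot states these facts in an abstract normed module; [:> R] keeps the
   equations at type [R], so that [ring] and [lra] still apply after rewriting. *)
Lemma RInt_Rplus (f g : R -> R) a b : ex_RInt f a b -> ex_RInt g a b ->
  RInt (fun x => f x + g x) a b = RInt f a b + RInt g a b :> R.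
Proof. exact (RInt_plus f g a b). Qed.

Lemma RInt_Rminus (f g : R -> R) a b : ex_RInt f a b -> ex_RInt g a b ->
  RInt (fun x => f x - g x) a b = RInt f a b - RInt g a b :> R.
Proof. exact (RInt_minus f g a b). Qed.

Lemma RInt_Rscal (f : R -> R) c a b : ex_RInt f a b ->
  RInt (fun x => c * f x) a b = c * RInt f a b :> R.
Proof. exact (RInt_scal f a b c). Qed.

Lemma RInt_Rconst (c a b : R) : RInt (fun _ => c) a b = c * (b - a) :> R.
Proof. rewrite RInt_const. unfold scal; simpl; unfold mult; simpl. ring. Qed.

Lemma RInt_Rpoint (f : R -> R) a : RInt f a a = 0 :> R.
Proof. exact (RInt_point a f). Qed.

Lemma RInt_RChasles (f : R -> R) a b c : ex_RInt f a b -> ex_RInt f b c ->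
  RInt f a b + RInt f b c = RInt f a c.
Proof. exact (RInt_Chasles f a b c). Qed.

Lemma RInt_ext_R (f g : R -> R) a b :
  (forall x, Rmin a b < x < Rmax a b -> f x = g x) -> RInt f a b = RInt g a b :> R.
Proof. exact (RInt_ext f g a b). Qed.

Lemma RInt_ext_on01 (f g : R -> R) : (forall t, 0 <= t <= 1 -> f t = g t) ->
  RInt f 0 1 = RInt g 0 1 :> R.
Proof. intros H. apply RInt_ext_R. intros t Ht. apply H. unfold Rmin, Rmax in Ht; destruct Rle_dec; lra. Qed.

Lemma RInt_lin_comb3_on01 (h f1 f2 f3 : R -> R) (c1 c2 c3 : R) :
  (forall t, 0 <= t <= 1 -> continuous f1 t) -> (forall t, 0 <= t <= 1 -> continuous f2 t) ->
  (forall t, 0 <= t <= 1 -> continuous f3 t) ->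
  (forall t, 0 <= t <= 1 -> h t = c1 * f1 t + c2 * f2 t + c3 * f3 t) ->
  RInt h 0 1 = c1 * RInt f1 0 1 + c2 * RInt f2 0 1 + c3 * RInt f3 0 1 :> R.
Proof.
  intros H1 H2 H3 Hh.
  assert (Hex : forall f : R -> R, (forall t, 0 <= t <= 1 -> continuous f t) -> ex_RInt f 0 1)
    by (intros; apply ex_RInt_on01; auto; lra).
  rewrite (RInt_ext_on01 _ _ Hh), !RInt_Rplus, !RInt_Rscal; auto;
    apply Hex; intros; continuity_R.
Qed.

Lemma is_derive_RInt_0 (g : R -> R) : (forall s, continuous g s) ->
  forall t, is_derive (fun t => RInt g 0 t) t (g t).
Proof.
  intros Hg t. apply (is_derive_RInt g _ 0); auto.
  apply filter_forall. intros b. apply (RInt_correct (V := R_CompleteNormedModule)).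
  apply ex_RInt_continuous_R. auto.
Qed.

Lemma is_derive_ext_val (f : R -> R) (x l l' : R) : is_derive f x l -> l = l' -> is_derive f x l'.
Proof. now intros H <-. Qed.

Lemma continuous_of_is_derive (f : R -> R) x l : is_derive f x l -> continuous f x.
Proof. intros H. apply (ex_derive_continuous (V := R_NormedModule)). eexists; eauto. Qed.

Lemma continuous_R_eps (f : R -> R) x : continuous f x ->
  forall eps, 0 < eps -> exists d, 0 < d /\ forall y, Rabs (y - x) < d -> Rabs (f y - f x) < eps.
Proof.
  intros Hf eps Heps. apply continuity_pt_filterlim in Hf.
  destruct (Hf eps Heps) as [d [Hd Hfd]]. exists d. split; [lra|].
  intros y Hy. destruct (Req_dec y x) as [->|Hne].
  - rewrite Rminus_diag, Rabs_R0. lra.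
  - apply Hfd. repeat split; auto.
Qed.

Lemma is_derive_of_exp_increment (f : R -> R) (x D : R) :
  (exists d, 0 < d /\ exists c, forall h, Rabs h < d ->
     exists q, f (x + h) - f x = h * exp q /\ Rabs (q - D) <= c * Rabs h) ->
  is_derive f x (exp D).
Proof.
  intros [d [Hd [c Hinc]]]. apply is_derive_Reals. intros eps Heps.
  destruct (continuous_R_eps exp D (continuous_exp D) eps Heps) as [eta [Heta Hexp]].
  assert (Hdelta : 0 < Rmin d (eta / (Rabs c + 1)))
    by (apply Rmin_pos; [lra | apply Rdiv_lt_0_compat; [lra | pose proof (Rabs_pos c); lra]]).
  exists (mkposreal _ Hdelta). intros h Hh0 Hh. simpl in Hh.
  assert (Hhd : Rabs h < d) by (eapply Rlt_le_trans; [exact Hh | apply Rmin_l]).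
  assert (Hhe : Rabs h * (Rabs c + 1) < eta).
  { pose proof (Rabs_pos c). apply (Rmult_lt_reg_r (/ (Rabs c + 1))); [apply Rinv_0_lt_compat; lra|].
    rewrite Rmult_assoc, Rinv_r, Rmult_1_r by lra.
    eapply Rlt_le_trans; [exact Hh | apply Rmin_r]. }
  destruct (Hinc h Hhd) as [q [Hq Hqb]].
  rewrite Hq. replace (h * exp q / h) with (exp q) by (field; exact Hh0).
  apply Hexp. eapply Rle_lt_trans; [exact Hqb|].
  pose proof (Rabs_pos h). pose proof (RRle_abs c). nra.
Qed.

Lemma RInt_Ropp (f : R -> R) a b : ex_RInt f a b -> RInt (fun x => - f x) a b = - RInt f a b :> R.
Proof. exact (RInt_opp f a b). Qed.

Lemma RInt_ge_0_on01 (g : R -> R) a b : 0 <= a <= b -> b <= 1 ->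
  (forall t, 0 <= t <= 1 -> continuous g t) -> (forall t, 0 <= t <= 1 -> 0 <= g t) ->
  0 <= RInt g a b.
Proof. intros Hab Hb Hc Hg. apply RInt_ge_0; [lra| apply ex_RInt_on01; auto; lra |]. intros; apply Hg; lra. Qed.

Lemma RInt_gt_0_on01 (g : R -> R) :
  (forall t, 0 <= t <= 1 -> continuous g t) -> (forall t, 0 <= t <= 1 -> 0 <= g t) ->
  nonzero_on01 g -> 0 < RInt g 0 1.
Proof.
  intros Hc Hg [t0 [Ht0 Hn]].
  assert (Hg0 : 0 < g t0) by (specialize (Hg t0 Ht0); lra).
  destruct (continuous_R_eps g t0 (Hc t0 Ht0) (g t0 / 2)) as [d [Hd Hnear]]; [lra|].
  set (u := Rmax 0 (t0 - d / 2)). set (v := Rmin 1 (t0 + d / 2)).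
  assert (Hu : 0 <= u <= t0) by (unfold u, Rmax; destruct Rle_dec; lra).
  assert (Hv : t0 <= v <= 1) by (unfold v, Rmin; destruct Rle_dec; lra).
  assert (Huv : u < v) by (unfold u, v, Rmax, Rmin; repeat destruct Rle_dec; lra).
  assert (Imid : 0 < RInt g u v).
  { apply RInt_gt_0; auto.
    - intros x Hx. assert (Rabs (x - t0) < d).
      { unfold u, v, Rmax, Rmin in Hx. repeat destruct Rle_dec in Hx; split_Rabs; lra. }
      specialize (Hnear x H). split_Rabs; lra.
    - intros; apply Hc; lra. }
  assert (0 <= RInt g 0 u) by (apply RInt_ge_0_on01; auto; lra).
  assert (0 <= RInt g v 1) by (apply RInt_ge_0_on01; auto; lra).
  rewrite <- (RInt_RChasles g 0 u 1), <- (RInt_RChasles g u v 1); [lra|..];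
    apply ex_RInt_on01; auto; lra.
Qed.

Lemma RInt_neq_0_on01 (g : R -> R) :
  (forall t, 0 <= t <= 1 -> continuous g t) -> sign_constant_on01 g -> nonzero_on01 g ->
  RInt g 0 1 <> 0.
Proof.
  intros Hc [Hg|Hg] Hn.
  - apply Rgt_not_eq, RInt_gt_0_on01; auto.
  - assert (0 < RInt (fun t => - g t) 0 1).
    { apply RInt_gt_0_on01.
      - intros; continuity_R.
      - intros t Ht; specialize (Hg t Ht); lra.
      - destruct Hn as [t [Ht Hgt]]. exists t. split; auto. lra. }
    rewrite RInt_Ropp in H by (apply ex_RInt_on01; auto; lra). lra.
Qed.

Lemma RInt_0_t_between (h : R -> R) t : 0 <= t <= 1 ->
  (forall s, 0 <= s <= 1 -> continuous h s) -> sign_constant_on01 h ->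
  (0 <= RInt h 0 t <= RInt h 0 1) \/ (RInt h 0 1 <= RInt h 0 t <= 0).
Proof.
  intros Ht Hc Hs.
  rewrite <- (RInt_RChasles h 0 t 1) by (apply ex_RInt_on01; auto; lra).
  destruct Hs as [Hh|Hh]; [left|right].
  - assert (0 <= RInt h 0 t) by (apply RInt_ge_0_on01; auto; lra).
    assert (0 <= RInt h t 1) by (apply RInt_ge_0_on01; auto; lra). lra.
  - assert (Hc' : forall s, 0 <= s <= 1 -> continuous (fun s => - h s) s) by (intros; continuity_R).
    assert (Hh' : forall s, 0 <= s <= 1 -> 0 <= - h s) by (intros s Hs; specialize (Hh s Hs); lra).
    assert (0 <= RInt (fun s => - h s) 0 t) by (apply RInt_ge_0_on01; auto; lra).
    assert (0 <= RInt (fun s => - h s) t 1) by (apply RInt_ge_0_on01; auto; lra).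
    rewrite !RInt_Ropp in * by (apply ex_RInt_on01; auto; lra). lra.
Qed.

Lemma nonvanishing_sign_strict (g : R -> R) :
  (forall t, 0 <= t <= 1 -> continuous g t) -> (forall t, 0 <= t <= 1 -> g t <> 0) ->
  (forall t, 0 <= t <= 1 -> 0 < g t) \/ (forall t, 0 <= t <= 1 -> g t < 0).
Proof.
  intros Hc Hn.
  set (gc := fun s => g (clamp 0 1 s)).
  assert (Hgc : continuity gc).
  { intros s. apply continuity_pt_continuous, (continuous_comp (clamp 0 1) g).
    - apply continuous_clamp.
    - apply Hc, clamp_bounds; lra. }
  assert (Hsame : forall t, 0 <= t <= 1 -> 0 < g 0 * g t).
  { intros t Ht. destruct (Rlt_or_le 0 (g 0 * g t)) as [|Hle]; auto. exfalso.
    assert (H0 := Hn 0 ltac:(lra)). assert (Ht' := Hn t Ht).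
    assert (Hopp : g 0 * g t < 0).
    { destruct (Rle_lt_or_eq_dec _ _ Hle) as [|E]; auto.
      apply Rmult_integral in E. tauto. }
    destruct (IVT_gen gc 0 t 0 Hgc) as [x [Hx Hx0]].
    { unfold gc. rewrite !clamp_id by lra. unfold Rmin, Rmax; repeat destruct Rle_dec; nra. }
    unfold gc in Hx0. rewrite clamp_id in Hx0 by (unfold Rmin, Rmax in Hx; destruct Rle_dec; lra).
    apply (Hn x); auto. unfold Rmin, Rmax in Hx; destruct Rle_dec; lra. }
  destruct (Rlt_or_le 0 (g 0)) as [Hpos|Hneg]; [left|right]; intros t Ht;
    specialize (Hsame t Ht); nra.
Qed.

Lemma RInt_mult_neq_0_on01 (P w : R -> R) :
  (forall t, 0 <= t <= 1 -> continuous P t) -> (forall t, 0 <= t <= 1 -> continuous w t) ->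
  sign_constant_on01 P -> nonzero_on01 P -> (forall t, 0 <= t <= 1 -> w t <> 0) ->
  RInt (fun t => P t * w t) 0 1 <> 0.
Proof.
  intros HcP Hcw HP [t [Ht HPt]] Hw.
  apply RInt_neq_0_on01.
  - intros; continuity_R.
  - destruct (nonvanishing_sign_strict w Hcw Hw) as [Hs|Hs]; destruct HP as [Hp|Hp];
      [left|right|right|left]; intros s Hs'; specialize (Hs s Hs'); specialize (Hp s Hs'); nra.
  - exists t. split; [exact Ht|]. apply Rmult_integral_contrapositive_currified; auto.
Qed.

Lemma bounded_on01 (f : R -> R) : (forall t, 0 <= t <= 1 -> continuous f t) ->
  exists M, 0 <= M /\ forall t, 0 <= t <= 1 -> Rabs (f t) <= M.
Proof.
  intros Hf.
  destruct (continuity_ab_maj (fun t => Rabs (f t)) 0 1 ltac:(lra)) as [m [Hm _]].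
  { intros t Ht. apply continuity_pt_continuous. continuity_R. }
  exists (Rabs (f m)). split; [apply Rabs_pos | exact Hm].
Qed.

Lemma Derive_of_is_derive (f : R -> R) x l : is_derive f x l -> Derive (fun y => f y) x = l.
Proof. apply is_derive_unique. Qed.

Ltac rewrite_Derive :=
  repeat match goal with H : is_derive _ _ _ |- _ => rewrite (Derive_of_is_derive _ _ _ H) end.

Ltac auto_derive_R :=
  auto_derive; [ repeat split; try (eexists; eassumption); auto .. | rewrite_Derive ].

Lemma RInt_of_is_derive (q r : R -> R) a b :
  (forall s, Rmin a b <= s <= Rmax a b -> continuous r s) ->
  (forall s, Rmin a b <= s <= Rmax a b -> is_derive q s (r s)) ->
  RInt r a b = q b - q a :> R.
Proof. intros Hr Hq. exact (is_RInt_unique _ _ _ _ (is_RInt_derive q r a b Hq Hr)). Qed.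

Lemma RInt_0_t_of_is_derive (q r : R -> R) t : 0 <= t <= 1 ->
  (forall s, 0 <= s <= 1 -> continuous r s) -> (forall s, 0 <= s <= 1 -> is_derive q s (r s)) ->
  RInt r 0 t = q t - q 0 :> R.
Proof.
  intros Ht Hr Hq.
  apply RInt_of_is_derive; intros s Hs; [apply Hr | apply Hq]; apply (Rmin_Rmax_01 0 t); auto; lra.
Qed.

Lemma RInt_eq_0_of_periodic_primitive (q r : R -> R) :
  (forall s, 0 <= s <= 1 -> continuous r s) -> (forall s, 0 <= s <= 1 -> is_derive q s (r s)) ->
  q 1 = q 0 -> RInt r 0 1 = 0.
Proof. intros Hr Hq Hper. rewrite (RInt_0_t_of_is_derive q r 1), Hper; auto; lra. Qed.

(** * Scalar linear equations *)

Lemma antiderivative_on01 (k : R -> R) : (forall t, 0 <= t <= 1 -> continuous k t) ->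
  exists K, (forall t, 0 <= t <= 1 -> is_derive K t (k t)) /\
            (forall t, 0 <= t <= 1 -> K t = RInt k 0 t).
Proof.
  intros Hk. set (kc := fun s => k (clamp 0 1 s)).
  assert (Hkc : forall s, continuous kc s).
  { intros s. apply (continuous_comp (clamp 0 1) k); [apply continuous_clamp|].
    apply Hk, clamp_bounds; lra. }
  exists (fun t => RInt kc 0 t). split.
  - intros t Ht. apply (is_derive_ext_val _ _ (kc t)); [apply is_derive_RInt_0; auto|].
    unfold kc; rewrite clamp_id; auto.
  - intros t Ht. apply RInt_ext. intros s Hs. unfold kc. rewrite clamp_id; auto.
    unfold Rmin, Rmax in Hs; destruct Rle_dec; lra.
Qed.

Lemma variation_of_constants (w k g K : R -> R) :
  (forall t, 0 <= t <= 1 -> is_derive K t (k t)) ->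
  (forall t, 0 <= t <= 1 -> continuous g t) ->
  (forall t, 0 <= t <= 1 -> is_derive w t (k t * w t + g t)) ->
  forall t, 0 <= t <= 1 ->
    w t * exp (- K t) - w 0 * exp (- K 0) = RInt (fun s => g s * exp (- K s)) 0 t.
Proof.
  intros HK Hg Hw t Ht. symmetry.
  apply (RInt_0_t_of_is_derive (fun s => w s * exp (- K s))); auto.
  - intros s Hs. assert (continuous K s) by (eapply continuous_of_is_derive, HK; auto).
    continuity_R.
  - intros s Hs. specialize (HK s Hs). specialize (Hw s Hs). auto_derive_R. ring.
Qed.

Lemma linear_solution (w k : R -> R) :
  (forall t, 0 <= t <= 1 -> continuous k t) ->
  (forall t, 0 <= t <= 1 -> is_derive w t (k t * w t)) ->
  forall t, 0 <= t <= 1 -> w t = w 0 * exp (RInt k 0 t).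
Proof.
  intros Hk Hw t Ht.
  destruct (antiderivative_on01 k Hk) as [K [HK HKe]].
  assert (Hw' : forall s, 0 <= s <= 1 -> is_derive w s (k s * w s + 0))
    by (intros; rewrite Rplus_0_r; auto).
  assert (H := variation_of_constants w k (fun _ => 0) K HK
                 (fun _ _ => continuous_const _ _) Hw' t Ht).
  rewrite (RInt_ext_R _ (fun _ => 0)), RInt_Rconst, (HKe t Ht), (HKe 0), RInt_Rpoint, Ropp_0, exp_0 in H
    by (intros; ring || lra).
  replace (w t) with (w t * exp (- RInt k 0 t) * exp (RInt k 0 t))
    by (rewrite Rmult_assoc, <- exp_plus, Rplus_opp_l, exp_0; ring).
  f_equal. lra.
Qed.

Lemma RInt_eq_0_of_periodic_linear (w k : R -> R) :
  (forall t, 0 <= t <= 1 -> continuous k t) ->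
  (forall t, 0 <= t <= 1 -> is_derive w t (k t * w t)) ->
  w 1 = w 0 -> w 0 <> 0 -> RInt k 0 1 = 0.
Proof.
  intros Hk Hw Hper H0.
  assert (H := linear_solution w k Hk Hw 1 ltac:(lra)).
  rewrite Hper in H. apply exp_inv. rewrite exp_0.
  apply (Rmult_eq_reg_l (w 0)); auto. lra.
Qed.

(* Variation of constants gives [w t e^{-K t} - w 0 = G t] with [G] monotone and
   [G 1 <> 0]; a zero of [w] then forces [e^{-K 1} <= 0]. *)
Lemma periodic_affine_nonvanishing (w k g : R -> R) :
  (forall t, 0 <= t <= 1 -> continuous k t) -> (forall t, 0 <= t <= 1 -> continuous g t) ->
  sign_constant_on01 g -> nonzero_on01 g ->
  (forall t, 0 <= t <= 1 -> is_derive w t (k t * w t + g t)) -> w 1 = w 0 ->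
  forall t, 0 <= t <= 1 -> w t <> 0.
Proof.
  intros Hk Hg Hsg Hng Hw Hper t0 Ht0 Hzero.
  destruct (antiderivative_on01 k Hk) as [K [HK HKe]].
  assert (HK0 : K 0 = 0) by (rewrite HKe, RInt_Rpoint; lra).
  set (h := fun s => g s * exp (- K s)).
  assert (Hh : forall s, 0 <= s <= 1 -> continuous h s).
  { intros s Hs. assert (continuous K s) by (eapply continuous_of_is_derive, HK; auto).
    unfold h; continuity_R. }
  assert (Hsh : sign_constant_on01 h).
  { destruct Hsg as [Hs|Hs]; [left|right]; intros s Hs'; specialize (Hs s Hs');
      pose proof (exp_pos (- K s)); unfold h; nra. }
  assert (G1 : RInt h 0 1 <> 0).
  { apply RInt_neq_0_on01; auto. destruct Hng as [s [Hs Hgs]]. exists s. split; [exact Hs|].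
    apply Rmult_integral_contrapositive_currified; [auto | apply Rgt_not_eq, exp_pos]. }
  assert (Hvc := variation_of_constants w k g K HK Hg Hw).
  assert (At1 := Hvc 1 ltac:(lra)). assert (At0 := Hvc t0 Ht0).
  rewrite HK0, Ropp_0, exp_0, Hper in *. rewrite Hzero in At0.
  assert (E := exp_pos (- K 1)).
  destruct (RInt_0_t_between h t0 Ht0 Hh Hsh); unfold h in *; nra.
Qed.

(** * Existence and stability of solutions *)

Lemma Rabs_RInt_le_const (f : R -> R) a b M : (forall u, continuous f u) ->
  (forall u, Rabs (f u) <= M) -> Rabs (RInt f a b) <= M * Rabs (b - a).
Proof.
  intros Hf Hb.
  assert (Hex : forall a b, ex_RInt f a b) by (intros; apply ex_RInt_continuous_R; auto).
  destruct (Rle_or_lt a b) as [Hab|Hab].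
  - rewrite (Rabs_pos_eq (b - a)), Rmult_comm by lra. apply abs_RInt_le_const; auto.
  - rewrite <- (opp_RInt_swap f b a (Hex b a)), Rabs_Ropp, (Rabs_left (b - a)), Rmult_comm by lra.
    replace (- (b - a)) with (a - b) by ring. apply abs_RInt_le_const; auto; lra.
Qed.

Lemma RInt_exp_weight_bound (f : R -> R) (c lam t : R) : 0 < lam ->
  (forall u, continuous f u) -> (forall u, Rabs (f u) <= c * exp (lam * Rabs u)) ->
  Rabs (RInt f 0 t) <= c / lam * (exp (lam * Rabs t) - 1).
Proof.
  intros Hlam Hf Hb.
  assert (Habs : forall a b, a <= b -> Rabs (RInt f a b) <= RInt (fun u => Rabs (f u)) a b)
    by (intros; apply abs_RInt_le; [lra | apply ex_RInt_continuous_R; auto]).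
  destruct (Rle_or_lt 0 t) as [Ht|Ht].
  - assert (Hexp : RInt (fun u => c * exp (lam * u)) 0 t = c / lam * (exp (lam * t) - 1) :> R).
    { rewrite (RInt_of_is_derive (fun u => c / lam * exp (lam * u))).
      - rewrite Rmult_0_r, exp_0. ring.
      - intros; continuity_R.
      - intros s _. auto_derive_R. field. lra. }
    rewrite (Rabs_pos_eq t), <- Hexp by lra.
    eapply Rle_trans; [apply Habs; lra|]. apply RInt_le; auto.
    1, 2: apply ex_RInt_continuous_R; intros; continuity_R.
    intros u Hu. replace (lam * u) with (lam * Rabs u) by (rewrite Rabs_pos_eq; lra). apply Hb.
  - assert (Hexp : RInt (fun u => c * exp (- lam * u)) t 0 = c / lam * (exp (lam * - t) - 1) :> R).
    { rewrite (RInt_of_is_derive (fun u => - (c / lam) * exp (- lam * u))).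
      - rewrite Rmult_0_r, exp_0. replace (lam * - t) with (- lam * t) by ring. ring.
      - intros; continuity_R.
      - intros s _. auto_derive_R. field. lra. }
    rewrite (Rabs_left t), <- (opp_RInt_swap f t 0), Rabs_Ropp, <- Hexp
      by (auto; apply ex_RInt_continuous_R; auto).
    eapply Rle_trans; [apply Habs; lra|]. apply RInt_le; try lra.
    1, 2: apply ex_RInt_continuous_R; intros; continuity_R.
    intros u Hu. replace (- lam * u) with (lam * Rabs u) by (rewrite Rabs_left; lra). apply Hb.
Qed.

Lemma ex_finite_lim_seq_geometric (u : nat -> R) (C : R) :
  (forall n k, Rabs (u (n + k)%nat - u n) <= C * (1 / 2) ^ n) -> ex_finite_lim_seq u.
Proof.
  intros Hu. apply ex_lim_seq_cauchy_corr. intros eps.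
  assert (HC : 0 <= C).
  { specialize (Hu O O). rewrite Nat.add_0_r, Rminus_diag, Rabs_R0 in Hu. simpl in Hu. lra. }
  destruct (pow_lt_1_zero (1 / 2) ltac:(rewrite Rabs_pos_eq; lra) (eps / (2 * C + 1)))
    as [N HN]; [apply Rdiv_lt_0_compat; [apply cond_pos | lra]|].
  specialize (HN N (le_n N)). rewrite Rabs_pos_eq in HN by (apply pow_le; lra).
  apply (Rmult_lt_compat_l (2 * C + 1)) in HN; [|lra].
  replace ((2 * C + 1) * (eps / (2 * C + 1))) with (pos eps) in HN by (field; lra).
  exists N. intros n m Hn Hm.
  assert (An := Hu N (n - N)%nat). assert (Am := Hu N (m - N)%nat).
  replace (N + (n - N))%nat with n in An by lia. replace (N + (m - N))%nat with m in Am by lia.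
  assert (0 <= (1 / 2) ^ N) by (apply pow_le; lra).
  replace (u n - u m) with ((u n - u N) - (u m - u N)) by ring.
  eapply Rle_lt_trans; [apply Rabs_triang|]. rewrite Rabs_Ropp. nra.
Qed.

Lemma is_lim_seq_geometric (u : nat -> R) (l C : R) :
  (forall n, Rabs (u n - l) <= C * (1 / 2) ^ n) -> is_lim_seq u l.
Proof.
  intros Hu.
  assert (Hgeom : is_lim_seq (fun n => C * (1 / 2) ^ n) 0).
  { replace (Finite 0) with (Rbar_mult C 0) by (simpl; f_equal; ring).
    apply is_lim_seq_scal_l, is_lim_seq_geom. rewrite Rabs_pos_eq; lra. }
  apply (is_lim_seq_le_le (fun n => l - C * (1 / 2) ^ n) _ (fun n => l + C * (1 / 2) ^ n)).
  - intros n. specialize (Hu n). split_Rabs; lra.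
  - replace (Finite l) with (Finite (l - 0)) by (f_equal; ring).
    apply is_lim_seq_minus'; auto. apply is_lim_seq_const.
  - replace (Finite l) with (Finite (l + 0)) by (f_equal; ring).
    apply is_lim_seq_plus'; auto. apply is_lim_seq_const.
Qed.

Lemma Rabs_lim_sub_le (u : nat -> R) (l a B : R) (n : nat) : is_lim_seq u l ->
  (forall k, Rabs (u (n + k)%nat - a) <= B) -> Rabs (l - a) <= B.
Proof.
  intros Hl Hb.
  apply (is_lim_seq_incr_n u n) in Hl.
  assert (Habs := is_lim_seq_abs _ _ (is_lim_seq_minus' _ _ _ _ Hl (is_lim_seq_const a))).
  apply (is_lim_seq_le _ (fun _ => B) _ B) in Habs; auto using is_lim_seq_const.
  intros k. rewrite Nat.add_comm. apply Hb.
Qed.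

Section PicardLindelof.

Variable F : R -> R -> R.
Variables M L z : R.
Hypothesis F_bounded : forall t x, Rabs (F t x) <= M.
Hypothesis F_lipschitz : forall t x y, Rabs (F t x - F t y) <= L * Rabs (x - y).
Hypothesis L_pos : 0 < L.
Hypothesis F_continuous : forall phi : R -> R, (forall t, continuous phi t) ->
  forall t, continuous (fun s => F s (phi s)) t.

Fixpoint picard (n : nat) : R -> R :=
  match n with
  | O => fun _ => z
  | S n => fun t => z + RInt (fun s => F s (picard n s)) 0 t
  end.

Let M_nonneg : 0 <= M.
Proof. eapply Rle_trans; [apply Rabs_pos | apply (F_bounded 0 0)]. Qed.

Let exp_weight_ge_1 t : 1 <= exp (2 * L * Rabs t).
Proof. pose proof (exp_ineq1_le (2 * L * Rabs t)). pose proof (Rabs_pos t). nra. Qed.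

Lemma is_derive_integral_equation (phi : R -> R) : (forall t, continuous phi t) ->
  forall t, is_derive (fun t => z + RInt (fun s => F s (phi s)) 0 t) t (F t (phi t)).
Proof.
  intros Hphi t. apply (is_derive_ext_val _ _ (0 + F t (phi t))); [|ring].
  apply (is_derive_plus (fun _ => z)); [apply (is_derive_const (K := R_AbsRing) (V := R_NormedModule))|].
  apply (is_derive_RInt_0 (fun s => F s (phi s))), F_continuous, Hphi.
Qed.

Lemma continuous_picard n t : continuous (picard n) t.
Proof.
  revert t; induction n as [|n IH]; intros t; [apply continuous_const|].
  eapply continuous_of_is_derive, is_derive_integral_equation, IH.
Qed.

Lemma RInt_F_sub (phi psi : R -> R) t :
  (forall s, continuous phi s) -> (forall s, continuous psi s) ->
  RInt (fun s => F s (phi s)) 0 t - RInt (fun s => F s (psi s)) 0 t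
  = RInt (fun s => F s (phi s) - F s (psi s)) 0 t.
Proof.
  intros Hphi Hpsi. rewrite RInt_Rminus; auto; apply ex_RInt_continuous_R; intros; apply F_continuous; auto.
Qed.

(* In the weight [exp (2 L |t|)] every Picard step contracts by [1/2]. *)
Lemma picard_step n t :
  Rabs (picard (S n) t - picard n t) <= M / (2 * L) * (1 / 2) ^ n * exp (2 * L * Rabs t).
Proof.
  revert t; induction n as [|n IH]; intros t; pose proof (exp_weight_ge_1 t).
  - simpl picard. rewrite Rplus_minus_l.
    eapply Rle_trans; [apply (RInt_exp_weight_bound _ M (2 * L)); try lra|].
    + intros; apply (F_continuous (fun _ => z)). intros; apply continuous_const.
    + intros u. pose proof (exp_weight_ge_1 u). specialize (F_bounded u z). nra.
    + assert (0 <= M / (2 * L)) by (apply Rdiv_le_0_compat; lra). simpl. nra.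
  - set (B := M / (2 * L) * (1 / 2) ^ n).
    assert (HB : 0 <= B) by (apply Rmult_le_pos; [apply Rdiv_le_0_compat | apply pow_le]; lra).
    change (picard (S (S n)) t - picard (S n) t) with
      ((z + RInt (fun s => F s (picard (S n) s)) 0 t) - (z + RInt (fun s => F s (picard n s)) 0 t)).
    replace (M / (2 * L) * (1 / 2) ^ S n * exp (2 * L * Rabs t)) with (B / 2 * exp (2 * L * Rabs t))
      by (unfold B; simpl; field; lra).
    replace (z + _ - (z + _)) with (RInt (fun s => F s (picard (S n) s)) 0 t
                                    - RInt (fun s => F s (picard n s)) 0 t) by ring.
    rewrite RInt_F_sub by apply continuous_picard.
    eapply Rle_trans; [apply (RInt_exp_weight_bound _ (L * B) (2 * L)); try lra|].
    + intros. apply continuous_Rminus; apply F_continuous, continuous_picard.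
    + intros u. eapply Rle_trans; [apply F_lipschitz|]. rewrite Rmult_assoc.
      apply Rmult_le_compat_l; [lra | apply IH].
    + replace (L * B / (2 * L)) with (B / 2) by (field; lra). nra.
Qed.

Lemma picard_cauchy n k t :
  Rabs (picard (n + k) t - picard n t) <= M / L * (1 / 2) ^ n * exp (2 * L * Rabs t).
Proof.
  set (e := exp (2 * L * Rabs t)). set (a := (1 / 2) ^ n).
  assert (He : 0 < e) by apply exp_pos.
  assert (Ha : 0 <= a) by (apply pow_le; lra).
  assert (HML : 0 <= M / L) by (apply Rdiv_le_0_compat; lra).
  enough (Hk : Rabs (picard (n + k) t - picard n t) <= M / L * a * (1 - (1 / 2) ^ k) * e).
  { assert (0 < (1 / 2) ^ k) by (apply pow_lt; lra). eapply Rle_trans; [exact Hk|].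
    apply Rmult_le_compat_r; [lra|]. rewrite <- (Rmult_1_r (M / L * a)) at 2.
    apply Rmult_le_compat_l; [apply Rmult_le_pos|]; lra. }
  induction k as [|k IH].
  - rewrite Nat.add_0_r, Rminus_diag, Rabs_R0. simpl. lra.
  - replace (picard (n + S k) t - picard n t)
      with ((picard (S (n + k)) t - picard (n + k) t) + (picard (n + k) t - picard n t))
      by (rewrite Nat.add_succ_r; ring).
    eapply Rle_trans; [apply Rabs_triang|].
    assert (Hstep := picard_step (n + k) t). rewrite pow_add in Hstep. fold e a in Hstep.
    assert (Hid : M / (2 * L) * (a * (1 / 2) ^ k) * e + M / L * a * (1 - (1 / 2) ^ k) * e
                  = M / L * a * (1 - (1 / 2) ^ S k) * e) by (simpl; field; lra).
    lra.
Qed.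

Definition picard_limit (t : R) : R := real (Lim_seq (fun n => picard n t)).

Lemma is_lim_seq_picard t : is_lim_seq (fun n => picard n t) (picard_limit t).
Proof.
  assert (Hex : ex_finite_lim_seq (fun n => picard n t)).
  { apply (ex_finite_lim_seq_geometric _ (M / L * exp (2 * L * Rabs t))). intros n k.
    eapply Rle_trans; [apply picard_cauchy | right; ring]. }
  destruct Hex as [l Hl]. unfold picard_limit. rewrite (is_lim_seq_unique _ _ Hl). exact Hl.
Qed.

Lemma picard_limit_tail n t :
  Rabs (picard_limit t - picard n t) <= M / L * (1 / 2) ^ n * exp (2 * L * Rabs t).
Proof. apply (Rabs_lim_sub_le _ _ _ _ n (is_lim_seq_picard t)). intros k. apply picard_cauchy. Qed.

Lemma picard_lipschitz n t s : Rabs (picard n t - picard n s) <= M * Rabs (t - s).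
Proof.
  destruct n as [|n]; simpl picard.
  - rewrite Rminus_diag, Rabs_R0. apply Rmult_le_pos; [lra | apply Rabs_pos].
  - assert (Hex : forall a b, ex_RInt (fun u => F u (picard n u)) a b)
      by (intros; apply ex_RInt_continuous_R; intros; apply F_continuous, continuous_picard).
    rewrite <- (RInt_RChasles _ 0 s t) by auto.
    assert (E : forall x y : R, z + (x + y) - (z + x) = y) by (intros; ring).
    rewrite E. apply Rabs_RInt_le_const; auto. intros; apply F_continuous, continuous_picard.
Qed.

Lemma continuous_picard_limit t : continuous picard_limit t.
Proof.
  apply continuous_of_lipschitz with M. intros s.
  assert (Hlim := is_lim_seq_abs _ _
    (is_lim_seq_minus' _ _ _ _ (is_lim_seq_picard s) (is_lim_seq_picard t))).
  apply (is_lim_seq_le _ (fun _ => M * Rabs (s - t)) _ (M * Rabs (s - t))) in Hlim;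
    auto using is_lim_seq_const.
  intros n. apply picard_lipschitz.
Qed.

Lemma picard_limit_integral_equation t :
  picard_limit t = z + RInt (fun s => F s (picard_limit s)) 0 t.
Proof.
  assert (Hlim : is_lim_seq (fun n => picard (S n) t) (z + RInt (fun s => F s (picard_limit s)) 0 t)).
  { apply (is_lim_seq_geometric _ _ (M / (2 * L) * exp (2 * L * Rabs t))). intros n.
    simpl picard.
    replace (z + _ - (z + _)) with (RInt (fun s => F s (picard n s)) 0 t
                                    - RInt (fun s => F s (picard_limit s)) 0 t) by ring.
    rewrite RInt_F_sub by (apply continuous_picard || apply continuous_picard_limit).
    set (B := M / L * (1 / 2) ^ n).
    assert (HB : 0 <= B) by (apply Rmult_le_pos; [apply Rdiv_le_0_compat | apply pow_le]; lra).
    eapply Rle_trans; [apply (RInt_exp_weight_bound _ (L * B) (2 * L)); try lra|].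
    + intros. apply continuous_Rminus; apply F_continuous;
        (apply continuous_picard || apply continuous_picard_limit).
    + intros u. eapply Rle_trans; [apply F_lipschitz|]. rewrite Rmult_assoc.
      apply Rmult_le_compat_l; [lra|]. rewrite <- Rabs_Ropp, Ropp_minus_distr.
      apply picard_limit_tail.
    + replace (L * B / (2 * L)) with (M / (2 * L) * (1 / 2) ^ n) by (unfold B; field; lra).
      assert (0 <= M / (2 * L) * (1 / 2) ^ n)
        by (apply Rmult_le_pos; [apply Rdiv_le_0_compat | apply pow_le]; lra).
      pose proof (exp_weight_ge_1 t). nra. }
  apply (is_lim_seq_incr_1 (fun n => picard n t)) in Hlim.
  apply is_lim_seq_unique in Hlim. rewrite (is_lim_seq_unique _ _ (is_lim_seq_picard t)) in Hlim.
  now injection Hlim.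
Qed.

Lemma picard_lindelof : exists phi, phi 0 = z /\ forall t, is_derive phi t (F t (phi t)).
Proof.
  exists picard_limit. split.
  - rewrite picard_limit_integral_equation, RInt_Rpoint. ring.
  - intros t. apply (is_derive_ext (fun t => z + RInt (fun s => F s (picard_limit s)) 0 t)).
    + intros s. symmetry. apply picard_limit_integral_equation.
    + apply is_derive_integral_equation, continuous_picard_limit.
Qed.

End PicardLindelof.

Lemma nonincreasing_on01 (E dE : R -> R) :
  (forall s, 0 <= s <= 1 -> is_derive E s (dE s)) -> (forall s, 0 <= s <= 1 -> dE s <= 0) ->
  forall t, 0 <= t <= 1 -> E t <= E 0.
Proof.
  intros HdE Hneg t Ht.
  destruct (MVT_gen E 0 t dE) as [c [Hc Hmvt]]; unfold Rmin, Rmax in *; destruct Rle_dec; try lra.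
  - intros s Hs. apply HdE. lra.
  - intros s Hs. apply continuity_pt_continuous, (continuous_of_is_derive _ _ (dE s)), HdE. lra.
  - pose proof (Hneg c ltac:(lra)). nra.
Qed.

Section LipschitzStability.

Variables (F : R -> R -> R) (L : R) (u v : R -> R).
Hypothesis L_nonneg : 0 <= L.
Hypothesis F_lipschitz : forall t x y, 0 <= t <= 1 -> Rabs (F t x - F t y) <= L * Rabs (x - y).
Hypothesis u_sol : forall t, 0 <= t <= 1 -> is_derive u t (F t (u t)).
Hypothesis v_sol : forall t, 0 <= t <= 1 -> is_derive v t (F t (v t)).

Lemma lipschitz_energy_decreasing t : 0 <= t <= 1 ->
  (u t - v t) ^ 2 * exp (- (2 * L) * t) <= (u 0 - v 0) ^ 2.
Proof.
  intros Ht.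
  set (E := fun s => (u s - v s) ^ 2 * exp (- (2 * L) * s)).
  set (dE := fun s => 2 * (u s - v s) * (F s (u s) - F s (v s)) * exp (- (2 * L) * s)
                      - 2 * L * (u s - v s) ^ 2 * exp (- (2 * L) * s)).
  assert (HdE : forall s, 0 <= s <= 1 -> is_derive E s (dE s)).
  { intros s Hs. pose proof (u_sol s Hs). pose proof (v_sol s Hs). unfold E, dE. auto_derive_R. ring. }
  assert (Hneg : forall s, 0 <= s <= 1 -> dE s <= 0).
  { intros s Hs. unfold dE.
    assert (Hcross : (u s - v s) * (F s (u s) - F s (v s)) <= L * (u s - v s) ^ 2).
    { eapply Rle_trans; [apply RRle_abs|]. rewrite Rabs_mult, <- (pow2_abs (u s - v s)).
      pose proof (F_lipschitz s (u s) (v s) Hs). pose proof (Rabs_pos (u s - v s)). nra. }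
    pose proof (exp_pos (- (2 * L) * s)). nra. }
  assert (H := nonincreasing_on01 E dE HdE Hneg t Ht).
  unfold E in H. rewrite Rmult_0_r, exp_0, Rmult_1_r in H. exact H.
Qed.

Lemma lipschitz_solutions_close t : 0 <= t <= 1 ->
  Rabs (u t - v t) <= exp L * Rabs (u 0 - v 0).
Proof.
  intros Ht.
  assert (Hmono : exp (2 * L * t) <= exp L ^ 2).
  { replace (exp L ^ 2) with (exp (L + L)) by (rewrite exp_plus; ring).
    destruct (Rle_lt_or_eq_dec (2 * L * t) (L + L)) as [Hlt|Heq]; [nra| |].
    - left; apply exp_increasing, Hlt.
    - right; f_equal; exact Heq. }
  assert (Hsq : Rabs (u t - v t) ^ 2 <= (exp L * Rabs (u 0 - v 0)) ^ 2).
  { rewrite pow2_abs.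
    replace ((u t - v t) ^ 2)
      with ((u t - v t) ^ 2 * exp (- (2 * L) * t) * exp (2 * L * t))
      by (rewrite Rmult_assoc, <- exp_plus, <- Ropp_mult_distr_l, Rplus_opp_l, exp_0; ring).
    rewrite Rpow_mult_distr, pow2_abs.
    pose proof (lipschitz_energy_decreasing t Ht).
    pose proof (exp_pos (2 * L * t)). pose proof (pow2_ge_0 (u 0 - v 0)).
    apply Rle_trans with ((u 0 - v 0) ^ 2 * exp (2 * L * t)); [apply Rmult_le_compat_r|]; nra. }
  assert (0 <= exp L * Rabs (u 0 - v 0))
    by (apply Rmult_le_pos; [apply Rlt_le, exp_pos | apply Rabs_pos]).
  pose proof (Rabs_pos (u t - v t)).
  destruct (Rle_or_lt (Rabs (u t - v t)) (exp L * Rabs (u 0 - v 0))); [assumption | nra].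
Qed.

End LipschitzStability.

(** * The Abel equation *)

Definition abel_field (A B C : R -> R) (t x : R) : R := A t * x ^ 3 + B t * x ^ 2 + C t * x.

Lemma abel_field_bound (a b c x Ma Mb Mc K : R) :
  Rabs a <= Ma -> Rabs b <= Mb -> Rabs c <= Mc -> Rabs x <= K ->
  Rabs (a * x ^ 3 + b * x ^ 2 + c * x) <= Ma * K ^ 3 + Mb * K ^ 2 + Mc * K.
Proof.
  intros Ha Hb Hc Hx.
  assert (Hx2 : Rabs (x ^ 2) <= K ^ 2) by (rewrite <- RPow_abs; apply pow_incr; split; [apply Rabs_pos | exact Hx]).
  assert (Hx3 : Rabs (x ^ 3) <= K ^ 3) by (rewrite <- RPow_abs; apply pow_incr; split; [apply Rabs_pos | exact Hx]).
  eapply Rle_trans; [apply Rabs_triang|]. apply Rplus_le_compat;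
    [eapply Rle_trans; [apply Rabs_triang|]; apply Rplus_le_compat|];
    rewrite Rabs_mult; apply Rmult_le_compat; auto using Rabs_pos.
Qed.

Lemma abel_field_lipschitz (a b c x y Ma Mb Mc K : R) :
  Rabs a <= Ma -> Rabs b <= Mb -> Rabs c <= Mc -> Rabs x <= K -> Rabs y <= K ->
  Rabs ((a * x ^ 3 + b * x ^ 2 + c * x) - (a * y ^ 3 + b * y ^ 2 + c * y))
  <= (3 * Ma * K ^ 2 + 2 * Mb * K + Mc) * Rabs (x - y).
Proof.
  intros Ha Hb Hc Hx Hy.
  replace ((a * x ^ 3 + b * x ^ 2 + c * x) - (a * y ^ 3 + b * y ^ 2 + c * y))
    with ((a * (x * x + x * y + y * y) + b * (x + y) + c) * (x - y)) by ring.
  rewrite Rabs_mult. apply Rmult_le_compat_r; [apply Rabs_pos|].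
  pose proof (Rabs_pos x). pose proof (Rabs_pos y).
  assert (Hq : Rabs (x * x + x * y + y * y) <= 3 * K ^ 2).
  { eapply Rle_trans; [apply Rabs_triang|]. eapply Rle_trans; [apply Rplus_le_compat_r, Rabs_triang|].
    rewrite !Rabs_mult. simpl. nra. }
  assert (Hl : Rabs (x + y) <= 2 * K) by (eapply Rle_trans; [apply Rabs_triang | lra]).
  eapply Rle_trans; [apply Rabs_triang|]. eapply Rle_trans; [apply Rplus_le_compat_r, Rabs_triang|].
  rewrite !Rabs_mult.
  assert (Rabs a * Rabs (x * x + x * y + y * y) <= Ma * (3 * K ^ 2))
    by (apply Rmult_le_compat; auto using Rabs_pos).
  assert (Rabs b * Rabs (x + y) <= Mb * (2 * K)) by (apply Rmult_le_compat; auto using Rabs_pos).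
  lra.
Qed.

Lemma abel_linearization_error (a b c u x Ma Mb Kx r : R) :
  Rabs a <= Ma -> Rabs b <= Mb -> Rabs x <= Kx -> Rabs (u - x) <= r ->
  Rabs ((a * (u ^ 2 + u * x + x ^ 2) + b * (u + x) + c) - (3 * a * x ^ 2 + 2 * b * x + c))
  <= r * (Ma * (r + 3 * Kx) + Mb).
Proof.
  intros Ha Hb Hx Hux.
  replace ((a * (u ^ 2 + u * x + x ^ 2) + b * (u + x) + c) - (3 * a * x ^ 2 + 2 * b * x + c))
    with ((u - x) * (a * ((u - x) + 3 * x) + b)) by ring.
  rewrite Rabs_mult. apply Rmult_le_compat; auto using Rabs_pos.
  eapply Rle_trans; [apply Rabs_triang|]. rewrite Rabs_mult.
  apply Rplus_le_compat; [|exact Hb]. apply Rmult_le_compat; auto using Rabs_pos.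
  eapply Rle_trans; [apply Rabs_triang|]. rewrite Rabs_mult, (Rabs_pos_eq 3) by lra. lra.
Qed.

Section AbelEquation.

Variables A B C : R -> R.
Hypothesis A_continuous : forall t, continuous A t.
Hypothesis B_continuous : forall t, continuous B t.
Hypothesis C_continuous : forall t, continuous C t.

Lemma is_sol_continuous x : is_sol A B C x -> forall t, 0 <= t <= 1 -> continuous x t.
Proof. intros Hx t Ht. exact (continuous_of_is_derive _ _ _ (Hx t Ht)). Qed.

Lemma is_sol_zero : is_sol A B C (fun _ => 0).
Proof.
  intros t _. apply (is_derive_ext_val _ _ 0); [|ring].
  apply (is_derive_const (K := R_AbsRing) (V := R_NormedModule)).
Qed.

Lemma is_sol_sub u v : is_sol A B C u -> is_sol A B C v ->
  forall t, 0 <= t <= 1 -> u t - v t = (u 0 - v 0) *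
    exp (RInt (fun s => A s * (u s ^ 2 + u s * v s + v s ^ 2) + B s * (u s + v s) + C s) 0 t).
Proof.
  intros Hu Hv.
  apply (linear_solution (fun s => u s - v s)).
  - intros t Ht. pose proof (is_sol_continuous u Hu t Ht). pose proof (is_sol_continuous v Hv t Ht).
    continuity_R.
  - intros t Ht. apply (is_derive_ext_val _ _ _ _ (is_derive_minus u v t _ _ (Hu t Ht) (Hv t Ht))).
    unfold minus, plus, opp; simpl. ring.
Qed.

Lemma is_sol_unique u v : is_sol A B C u -> is_sol A B C v -> u 0 = v 0 ->
  forall t, 0 <= t <= 1 -> u t = v t.
Proof.
  intros Hu Hv H0 t Ht. apply Rminus_diag_uniq.
  rewrite (is_sol_sub u v Hu Hv t Ht), H0, Rminus_diag. ring.
Qed.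

Lemma is_sol_neq u v : is_sol A B C u -> is_sol A B C v -> u 0 <> v 0 ->
  forall t, 0 <= t <= 1 -> u t <> v t.
Proof.
  intros Hu Hv H0 t Ht Heq. apply (Rminus_diag_eq (u t)) in Heq.
  rewrite (is_sol_sub u v Hu Hv t Ht) in Heq.
  apply Rmult_integral in Heq as [Heq|Heq]; [apply H0; lra | exact (Rgt_not_eq _ _ (exp_pos _) Heq)].
Qed.

Lemma nonzero_on01_is_sol x : is_sol A B C x -> nonzero_on01 x -> x 0 <> 0.
Proof.
  intros Hx [t [Ht Hxt]] H0. apply Hxt. exact (is_sol_unique x _ Hx is_sol_zero H0 t Ht).
Qed.

Lemma poincare_is_sol u : is_sol A B C u -> poincare A B C (u 0) = u 1.
Proof.
  intros Hu. unfold poincare.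
  destruct excluded_middle_informative as [Hex|Hnex]; [|exfalso; apply Hnex; eauto].
  destruct (constructive_indefinite_description _ Hex) as [v [Hv Hv0]]; simpl.
  apply (is_sol_unique v u); auto; lra.
Qed.

Definition abel_truncated (K t x : R) : R := abel_field A B C (clamp 0 1 t) (clamp (- K) K x).

Lemma abel_truncated_id K t x : 0 <= t <= 1 -> Rabs x <= K ->
  abel_truncated K t x = abel_field A B C t x.
Proof. intros Ht Hx. unfold abel_truncated. rewrite !clamp_id; auto. split_Rabs; lra. Qed.

Section Bounds.
Variables Ma Mb Mc K : R.
Hypothesis K_nonneg : 0 <= K.
Hypothesis A_bounded : forall t, 0 <= t <= 1 -> Rabs (A t) <= Ma.
Hypothesis B_bounded : forall t, 0 <= t <= 1 -> Rabs (B t) <= Mb.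
Hypothesis C_bounded : forall t, 0 <= t <= 1 -> Rabs (C t) <= Mc.

Lemma abel_truncated_bound t x :
  Rabs (abel_truncated K t x) <= Ma * K ^ 3 + Mb * K ^ 2 + Mc * K.
Proof.
  assert (Ht := clamp_bounds 0 1 t ltac:(lra)).
  apply abel_field_bound; auto using Rabs_clamp_le.
Qed.

Lemma abel_truncated_lipschitz t x y :
  Rabs (abel_truncated K t x - abel_truncated K t y)
  <= (3 * Ma * K ^ 2 + 2 * Mb * K + Mc) * Rabs (x - y).
Proof.
  assert (Ht := clamp_bounds 0 1 t ltac:(lra)).
  assert (HL : 0 <= 3 * Ma * K ^ 2 + 2 * Mb * K + Mc).
  { specialize (A_bounded 0 ltac:(lra)). specialize (B_bounded 0 ltac:(lra)).
    specialize (C_bounded 0 ltac:(lra)). pose proof (Rabs_pos (A 0)). pose proof (Rabs_pos (B 0)).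
    pose proof (Rabs_pos (C 0)). assert (0 <= K ^ 2) by apply pow2_ge_0. nra. }
  eapply Rle_trans; [apply abel_field_lipschitz; auto using Rabs_clamp_le|].
  apply Rmult_le_compat_l; [exact HL | apply clamp_lipschitz].
Qed.

End Bounds.

Lemma continuous_abel_truncated K (phi : R -> R) : (forall t, continuous phi t) ->
  forall t, continuous (fun s => abel_truncated K s (phi s)) t.
Proof.
  intros Hphi t. unfold abel_truncated, abel_field.
  assert (Hclamp01 : forall f : R -> R, (forall s, continuous f s) ->
                       continuous (fun s => f (clamp 0 1 s)) t)
    by (intros f Hf; apply (continuous_comp (clamp 0 1) f); auto using continuous_clamp).
  assert (continuous (fun s => A (clamp 0 1 s)) t) by auto.
  assert (continuous (fun s => B (clamp 0 1 s)) t) by auto.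
  assert (continuous (fun s => C (clamp 0 1 s)) t) by auto.
  assert (continuous (fun s => clamp (- K) K (phi s)) t)
    by (apply (continuous_comp phi (clamp (- K) K)); auto using continuous_clamp).
  continuity_R.
Qed.

(* Solve the truncated equation globally by Picard iteration; by the Gronwall-type
   estimate its solution stays within distance 1 of [x], where no truncation happens. *)
Lemma exists_solution_near x : is_sol A B C x ->
  exists d, 0 < d /\ exists Lc, 0 < Lc /\ forall z, Rabs (z - x 0) < d ->
    exists u, is_sol A B C u /\ u 0 = z /\
              forall t, 0 <= t <= 1 -> Rabs (u t - x t) <= Lc * Rabs (z - x 0).
Proof.
  intros Hx.
  destruct (bounded_on01 A) as [Ma [HMa0 HMa]]; [auto|].
  destruct (bounded_on01 B) as [Mb [HMb0 HMb]]; [auto|].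
  destruct (bounded_on01 C) as [Mc [HMc0 HMc]]; [auto|].
  destruct (bounded_on01 x) as [Kx [HKx HxK]]; [apply is_sol_continuous, Hx|].
  set (K := Kx + 1). set (L := 3 * Ma * K ^ 2 + 2 * Mb * K + Mc + 1).
  assert (HK : 0 <= K) by (unfold K; lra).
  assert (HFl : forall t y1 y2,
            Rabs (abel_truncated K t y1 - abel_truncated K t y2) <= L * Rabs (y1 - y2)).
  { intros t y1 y2. eapply Rle_trans; [apply (abel_truncated_lipschitz Ma Mb Mc); auto|].
    pose proof (Rabs_pos (y1 - y2)). unfold L. lra. }
  assert (HL : 0 < L) by (unfold L; pose proof (pow2_ge_0 K); nra).
  assert (Hxs : forall t, 0 <= t <= 1 -> is_derive x t (abel_truncated K t (x t))).
  { intros t Ht. rewrite abel_truncated_id; [apply Hx| |]; auto. specialize (HxK t Ht). unfold K; lra. }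
  exists (exp (- L)). split; [apply exp_pos|]. exists (exp L). split; [apply exp_pos|].
  intros z Hz.
  destruct (picard_lindelof (abel_truncated K) _ L z
              (abel_truncated_bound Ma Mb Mc K HK HMa HMb HMc) HFl HL
              (continuous_abel_truncated K)) as [u [Hu0 Hu]].
  assert (Hclose := lipschitz_solutions_close (abel_truncated K) L u x ltac:(lra)
                      (fun t y1 y2 _ => HFl t y1 y2) (fun t _ => Hu t) Hxs).
  rewrite Hu0 in Hclose. exists u. split; [|split; auto].
  intros t Ht. change (is_derive u t (abel_field A B C t (u t))).
  rewrite <- (abel_truncated_id K); [apply Hu | exact Ht|].
  assert (Hlt : exp L * Rabs (z - x 0) < 1).
  { replace 1 with (exp L * exp (- L)) by (rewrite <- exp_plus, Rplus_opp_r; apply exp_0).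
    apply Rmult_lt_compat_l; [apply exp_pos | exact Hz]. }
  specialize (Hclose t Ht). specialize (HxK t Ht).
  replace (u t) with (x t + (u t - x t)) by ring.
  eapply Rle_trans; [apply Rabs_triang|]. unfold K; lra.
Qed.

Lemma poincare_increment x : is_sol A B C x ->
  exists d, 0 < d /\ exists c, forall h, Rabs h < d ->
    exists q, poincare A B C (x 0 + h) - poincare A B C (x 0) = h * exp q /\
      Rabs (q - RInt (fun s => 3 * A s * x s ^ 2 + 2 * B s * x s + C s) 0 1) <= c * Rabs h.
Proof.
  intros Hx.
  destruct (exists_solution_near x Hx) as [d [Hd [Lc [HLc Hnear]]]].
  destruct (bounded_on01 A) as [Ma [HMa0 HMa]]; [auto|].
  destruct (bounded_on01 B) as [Mb [HMb0 HMb]]; [auto|].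
  destruct (bounded_on01 x) as [Kx [HKx HxK]]; [apply is_sol_continuous, Hx|].
  exists d. split; [exact Hd|]. exists (Lc * (Ma * (Lc * d + 3 * Kx) + Mb)). intros h Hh.
  destruct (Hnear (x 0 + h)) as [u [Hu [Hu0 Hux]]]; [replace (x 0 + h - x 0) with h by ring; exact Hh|].
  replace (x 0 + h - x 0) with h in Hux by ring.
  assert (Hcu := is_sol_continuous u Hu). assert (Hcx := is_sol_continuous x Hx).
  exists (RInt (fun s => A s * (u s ^ 2 + u s * x s + x s ^ 2) + B s * (u s + x s) + C s) 0 1).
  split.
  - rewrite <- Hu0, !poincare_is_sol, (is_sol_sub u x Hu Hx 1) by (auto; lra).
    rewrite Hu0. ring.
  - rewrite <- RInt_Rminus by (apply ex_RInt_on01; try lra; intros t Ht;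
                                 pose proof (Hcu t Ht); pose proof (Hcx t Ht); continuity_R).
    replace (Lc * (Ma * (Lc * d + 3 * Kx) + Mb) * Rabs h)
      with ((1 - 0) * (Lc * Rabs h * (Ma * (Lc * d + 3 * Kx) + Mb))) by ring.
    apply abs_RInt_le_const; [lra | |].
    + apply ex_RInt_on01; try lra. intros t Ht.
      pose proof (Hcu t Ht). pose proof (Hcx t Ht). continuity_R.
    + intros t Ht. eapply Rle_trans; [apply abel_linearization_error; auto|].
      assert (Lc * Rabs h <= Lc * d) by (apply Rmult_le_compat_l; lra).
      pose proof (Rabs_pos h). apply Rmult_le_compat_l; [nra|].
      apply Rplus_le_compat_r, Rmult_le_compat_l; lra.
Qed.

Lemma is_derive_poincare x : is_sol A B C x ->
  is_derive (poincare A B C) (x 0)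
    (exp (RInt (fun s => 3 * A s * x s ^ 2 + 2 * B s * x s + C s) 0 1)).
Proof. intros Hx. apply is_derive_of_exp_increment, poincare_increment, Hx. Qed.

Lemma is_sol_exp_change (I x : R -> R) : (forall t, 0 <= t <= 1 -> is_derive I t (C t)) ->
  is_sol A B C x ->
  is_sol (fun t => A t * exp (I t) ^ 2) (fun t => B t * exp (I t)) (fun _ => 0)
         (fun t => x t * exp (- I t)).
Proof.
  intros HI Hx t Ht. specialize (HI t Ht). specialize (Hx t Ht).
  auto_derive_R. rewrite exp_Ropp. pose proof (exp_pos (I t)). field. lra.
Qed.

End AbelEquation.

(** * Periodic orbits of the reduced equation *)

Section ReducedEquation.

Variables A B : R -> R.
Variables a b : R.
Hypothesis A_continuous : forall t, continuous A t.
Hypothesis B_continuous : forall t, continuous B t.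
Let P t := a * A t + b * B t.
Hypothesis P_sign : sign_constant_on01 P.
Hypothesis P_nonzero : nonzero_on01 P.

Let zero_continuous : forall t, continuous (fun _ : R => 0) t := continuous_const 0.

Let P_continuous t : continuous P t.
Proof. unfold P. continuity_R. Qed.

Section Orbit.

Variable y : R -> R.
Hypothesis y_orbit : periodic_orbit A B (fun _ => 0) y.
Hypothesis y0_neq_0 : y 0 <> 0.

Let y_sol : is_sol A B (fun _ => 0) y := proj1 y_orbit.
Let y_periodic : y 1 = y 0 := eq_sym (proj2 y_orbit).

Lemma orbit_continuous t : 0 <= t <= 1 -> continuous y t.
Proof. exact (is_sol_continuous A B (fun _ => 0) y y_sol t). Qed.

Lemma orbit_neq_0 t : 0 <= t <= 1 -> y t <> 0.
Proof.
  exact (is_sol_neq A B (fun _ => 0) A_continuous B_continuous zero_continuous y (fun _ => 0)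
           y_sol (is_sol_zero A B (fun _ => 0)) y0_neq_0 t).
Qed.

Lemma RInt_A_y2_B_y : RInt (fun t => A t * y t ^ 2 + B t * y t) 0 1 = 0 :> R.
Proof.
  apply (RInt_eq_0_of_periodic_linear y); auto.
  - intros t Ht. pose proof (orbit_continuous t Ht). continuity_R.
  - intros t Ht. apply (is_derive_ext_val _ _ _ _ (y_sol t Ht)). ring.
Qed.

Lemma RInt_A_y_B : RInt (fun t => A t * y t + B t) 0 1 = 0 :> R.
Proof.
  apply (RInt_eq_0_of_periodic_primitive (fun t => - / y t)).
  - intros t Ht. pose proof (orbit_continuous t Ht). continuity_R.
  - intros t Ht. pose proof (y_sol t Ht). pose proof (orbit_neq_0 t Ht).
    auto_derive_R. field. auto.
  - now rewrite y_periodic.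
Qed.

Lemma RInt_A_B_div_y : RInt (fun t => A t + B t / y t) 0 1 = 0 :> R.
Proof.
  apply (RInt_eq_0_of_periodic_primitive (fun t => - / (2 * y t ^ 2))).
  - intros t Ht. pose proof (orbit_continuous t Ht). pose proof (orbit_neq_0 t Ht). continuity_R.
  - intros t Ht. pose proof (y_sol t Ht). pose proof (orbit_neq_0 t Ht).
    auto_derive_R; [|field; auto]. intros Hy. apply (orbit_neq_0 t Ht). nra.
  - now rewrite y_periodic.
Qed.

Lemma a_sub_b_y_neq_0 t : 0 <= t <= 1 -> a - b * y t <> 0.
Proof.
  apply (periodic_affine_nonvanishing (fun t => a - b * y t) (fun t => A t * y t ^ 2)
           (fun t => - (y t ^ 2 * P t))).
  - intros s Hs. pose proof (orbit_continuous s Hs). continuity_R.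
  - intros s Hs. pose proof (orbit_continuous s Hs). continuity_R.
  - destruct P_sign as [HP|HP]; [right|left]; intros s Hs; specialize (HP s Hs);
      pose proof (pow2_ge_0 (y s)); nra.
  - destruct P_nonzero as [s [Hs HPs]]. exists s. split; [exact Hs|].
    pose proof (pow2_gt_0 (y s) (orbit_neq_0 s Hs)). intros Hzero.
    apply HPs. nra.
  - intros s Hs. pose proof (y_sol s Hs). auto_derive_R. unfold P. ring.
  - now rewrite y_periodic.
Qed.

Lemma RInt_A_y2_P_y2_div : RInt (fun t => A t * y t ^ 2 - P t * y t ^ 2 / (a - b * y t)) 0 1 = 0 :> R.
Proof.
  apply (RInt_eq_0_of_periodic_linear (fun t => a - b * y t)).
  - intros t Ht. pose proof (orbit_continuous t Ht). pose proof (a_sub_b_y_neq_0 t Ht). continuity_R.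
  - intros t Ht. pose proof (y_sol t Ht). pose proof (a_sub_b_y_neq_0 t Ht).
    auto_derive_R. unfold P. field. auto.
  - now rewrite y_periodic.
  - apply a_sub_b_y_neq_0. lra.
Qed.

Lemma RInt_P_y_div_B : a <> 0 -> RInt (fun t => P t * y t / (a - b * y t) + B t) 0 1 = 0 :> R.
Proof.
  intros Ha.
  rewrite (RInt_lin_comb3_on01 _ (fun t => A t * y t + B t) (fun t => A t * y t ^ 2 + B t * y t)
             (fun t => A t * y t ^ 2 - P t * y t ^ 2 / (a - b * y t)) 1 (b / a) (- (b / a))).
  - rewrite RInt_A_y_B, RInt_A_y2_B_y, RInt_A_y2_P_y2_div. ring.
  - intros t Ht. pose proof (orbit_continuous t Ht). continuity_R.
  - intros t Ht. pose proof (orbit_continuous t Ht). continuity_R.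
  - intros t Ht. pose proof (orbit_continuous t Ht). pose proof (a_sub_b_y_neq_0 t Ht). continuity_R.
  - intros t Ht. pose proof (a_sub_b_y_neq_0 t Ht). unfold P. field. auto.
Qed.

Lemma RInt_hyperbolicity_neq_0 : RInt (fun t => 3 * A t * y t ^ 2 + 2 * B t * y t) 0 1 <> 0.
Proof.
  rewrite (RInt_lin_comb3_on01 _ (fun t => A t * y t ^ 2 + B t * y t)
             (fun t => A t * y t ^ 2 - P t * y t ^ 2 / (a - b * y t))
             (fun t => P t * (y t ^ 2 / (a - b * y t))) 2 1 1).
  - rewrite RInt_A_y2_B_y, RInt_A_y2_P_y2_div, Rmult_0_r, Rmult_0_r, !Rplus_0_l, Rmult_1_l.
    apply RInt_mult_neq_0_on01; auto.
    + intros t Ht. pose proof (orbit_continuous t Ht). pose proof (a_sub_b_y_neq_0 t Ht). continuity_R.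
    + intros t Ht. pose proof (a_sub_b_y_neq_0 t Ht). pose proof (orbit_neq_0 t Ht).
      apply Rmult_integral_contrapositive_currified; [apply pow_nonzero | apply Rinv_neq_0_compat]; auto.
  - intros t Ht. pose proof (orbit_continuous t Ht). continuity_R.
  - intros t Ht. pose proof (orbit_continuous t Ht). pose proof (a_sub_b_y_neq_0 t Ht). continuity_R.
  - intros t Ht. pose proof (orbit_continuous t Ht). pose proof (a_sub_b_y_neq_0 t Ht). continuity_R.
  - intros t Ht. pose proof (a_sub_b_y_neq_0 t Ht). field. auto.
Qed.

End Orbit.

Section TwoOrbits.

Variables y1 y2 : R -> R.
Hypothesis y1_orbit : periodic_orbit A B (fun _ => 0) y1.
Hypothesis y2_orbit : periodic_orbit A B (fun _ => 0) y2.
Hypothesis y1_0 : y1 0 <> 0.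
Hypothesis y2_0 : y2 0 <> 0.

Let y1_continuous := orbit_continuous y1 y1_orbit.
Let y2_continuous := orbit_continuous y2 y2_orbit.
Let y1_neq_0 := orbit_neq_0 y1 y1_orbit y1_0.
Let y2_neq_0 := orbit_neq_0 y2 y2_orbit y2_0.

Lemma RInt_P_inv_sub : a = 0 -> RInt (fun t => P t * (/ y1 t - / y2 t)) 0 1 = 0 :> R.
Proof.
  intros Ha.
  assert (Hex : forall y, periodic_orbit A B (fun _ => 0) y -> y 0 <> 0 ->
                  ex_RInt (fun t => A t + B t / y t) 0 1).
  { intros y Hy Hy0. apply ex_RInt_on01; try lra. intros t Ht.
    pose proof (orbit_continuous y Hy t Ht). pose proof (orbit_neq_0 y Hy Hy0 t Ht). continuity_R. }
  rewrite (RInt_ext_on01 _ (fun t => b * ((A t + B t / y1 t) - (A t + B t / y2 t)))).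
  - rewrite RInt_Rscal, RInt_Rminus, !RInt_A_B_div_y; auto. ring.
    apply (ex_RInt_minus (V := R_NormedModule)); auto.
  - intros t Ht. pose proof (y1_neq_0 t Ht). pose proof (y2_neq_0 t Ht). unfold P, Rdiv.
    rewrite Ha. ring.
Qed.

Lemma RInt_P_y_div_sub : a <> 0 ->
  RInt (fun t => P t * (y1 t / (a - b * y1 t) - y2 t / (a - b * y2 t))) 0 1 = 0 :> R.
Proof.
  intros Ha.
  assert (Hex : forall y, periodic_orbit A B (fun _ => 0) y -> y 0 <> 0 ->
                  ex_RInt (fun t => P t * y t / (a - b * y t) + B t) 0 1).
  { intros y Hy Hy0. apply ex_RInt_on01; try lra. intros t Ht.
    pose proof (orbit_continuous y Hy t Ht). pose proof (a_sub_b_y_neq_0 y Hy Hy0 t Ht).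
    continuity_R. }
  rewrite (RInt_ext_on01 _ (fun t => (P t * y1 t / (a - b * y1 t) + B t)
                                    - (P t * y2 t / (a - b * y2 t) + B t))).
  - rewrite RInt_Rminus, !RInt_P_y_div_B; auto. ring.
  - intros t Ht. pose proof (a_sub_b_y_neq_0 y1 y1_orbit y1_0 t Ht).
    pose proof (a_sub_b_y_neq_0 y2 y2_orbit y2_0 t Ht). field. auto.
Qed.

Lemma reduced_orbit_start_unique : y1 0 = y2 0.
Proof.
  destruct (Req_dec (y1 0) (y2 0)) as [|Hne]; [assumption | exfalso].
  assert (Hsep := is_sol_neq A B (fun _ => 0) A_continuous B_continuous zero_continuous
                    y1 y2 (proj1 y1_orbit) (proj1 y2_orbit) Hne).
  assert (Q1 := a_sub_b_y_neq_0 y1 y1_orbit y1_0). assert (Q2 := a_sub_b_y_neq_0 y2 y2_orbit y2_0).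
  destruct (Req_dec a 0) as [Ha|Ha].
  - assert (Hw : forall t, 0 <= t <= 1 -> / y1 t - / y2 t <> 0).
    { intros t Ht. pose proof (y1_neq_0 t Ht). pose proof (y2_neq_0 t Ht).
      specialize (Hsep t Ht).
      replace (/ y1 t - / y2 t) with ((y2 t - y1 t) / (y1 t * y2 t)) by (field; auto).
      apply Rmult_integral_contrapositive_currified;
        [lra | apply Rinv_neq_0_compat, Rmult_integral_contrapositive_currified; auto]. }
    refine (RInt_mult_neq_0_on01 P _ (fun t _ => P_continuous t) _ P_sign P_nonzero Hw
              (RInt_P_inv_sub Ha)).
    intros t Ht. pose proof (y1_continuous t Ht). pose proof (y2_continuous t Ht).
    pose proof (y1_neq_0 t Ht). pose proof (y2_neq_0 t Ht). continuity_R.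
  - assert (Hw : forall t, 0 <= t <= 1 -> y1 t / (a - b * y1 t) - y2 t / (a - b * y2 t) <> 0).
    { intros t Ht. pose proof (Q1 t Ht). pose proof (Q2 t Ht). specialize (Hsep t Ht).
      replace (y1 t / (a - b * y1 t) - y2 t / (a - b * y2 t))
        with (a * (y1 t - y2 t) / ((a - b * y1 t) * (a - b * y2 t))) by (field; auto).
      apply Rmult_integral_contrapositive_currified;
        [apply Rmult_integral_contrapositive_currified; lra
        | apply Rinv_neq_0_compat, Rmult_integral_contrapositive_currified; auto]. }
    refine (RInt_mult_neq_0_on01 P _ (fun t _ => P_continuous t) _ P_sign P_nonzero Hw
              (RInt_P_y_div_sub Ha)).
    intros t Ht. pose proof (y1_continuous t Ht). pose proof (y2_continuous t Ht).
    pose proof (Q1 t Ht). pose proof (Q2 t Ht). continuity_R.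
Qed.

End TwoOrbits.

End ReducedEquation.

(** * Periodic orbits of the full equation *)

Section PeriodicOrbits.

Variables A B C : R -> R.
Variables a b : R.
Hypothesis A_continuous : forall t, continuous A t.
Hypothesis B_continuous : forall t, continuous B t.
Hypothesis C_continuous : forall t, continuous C t.
Hypothesis C_mean_zero : RInt C 0 1 = 0.
Hypothesis weight_sign : sign_constant_on01 (fun t => a * A t * exp (RInt C 0 t) + b * B t).
Hypothesis weight_nonzero : nonzero_on01 (fun t => a * A t * exp (RInt C 0 t) + b * B t).

Let I t := RInt C 0 t.
Let A' t := A t * exp (I t) ^ 2.
Let B' t := B t * exp (I t).
Let reduce (x : R -> R) t := x t * exp (- I t).

Let I_derive t : is_derive I t (C t).
Proof. exact (is_derive_RInt_0 C C_continuous t). Qed.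

Let I_0 : I 0 = 0.
Proof. apply RInt_Rpoint. Qed.

Let I_continuous t : continuous I t.
Proof. exact (continuous_of_is_derive _ _ _ (I_derive t)). Qed.

Let A'_continuous t : continuous A' t.
Proof. pose proof (I_continuous t). unfold A'. continuity_R. Qed.

Let B'_continuous t : continuous B' t.
Proof. pose proof (I_continuous t). unfold B'. continuity_R. Qed.

Let reduced_weight t : a * A' t + b * B' t = exp (I t) * (a * A t * exp (RInt C 0 t) + b * B t).
Proof. unfold A', B', I. ring. Qed.

Let reduced_weight_sign : sign_constant_on01 (fun t => a * A' t + b * B' t).
Proof.
  destruct weight_sign as [Hw|Hw]; [left|right]; intros t Ht; rewrite reduced_weight;
    specialize (Hw t Ht); pose proof (exp_pos (I t)); nra.
Qed.

Let reduced_weight_nonzero : nonzero_on01 (fun t => a * A' t + b * B' t).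
Proof.
  destruct weight_nonzero as [t [Ht Hw]]. exists t. split; [exact Ht|].
  rewrite reduced_weight. apply Rmult_integral_contrapositive_currified; [apply Rgt_not_eq, exp_pos | exact Hw].
Qed.

Lemma reduce_periodic_orbit x : periodic_orbit A B C x -> nonzero_on01 x ->
  periodic_orbit A' B' (fun _ => 0) (reduce x) /\ reduce x 0 <> 0.
Proof.
  intros [Hx Hper] Hnz.
  assert (Hx0 := nonzero_on01_is_sol A B C A_continuous B_continuous C_continuous x Hx Hnz).
  assert (R0 : reduce x 0 = x 0) by (unfold reduce; rewrite I_0, Ropp_0, exp_0; ring).
  assert (R1 : reduce x 1 = x 1) by (unfold reduce, I; rewrite C_mean_zero, Ropp_0, exp_0; ring).
  split; [split|].
  - apply (is_sol_exp_change A B C I x); auto.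
  - rewrite R0, R1. exact Hper.
  - rewrite R0. exact Hx0.
Qed.

Lemma periodic_orbit_unique x y :
  periodic_orbit A B C x -> nonzero_on01 x -> periodic_orbit A B C y -> nonzero_on01 y ->
  forall t, 0 <= t <= 1 -> x t = y t.
Proof.
  intros Hx Hnx Hy Hny.
  destruct (reduce_periodic_orbit x Hx Hnx) as [Hrx Hrx0].
  destruct (reduce_periodic_orbit y Hy Hny) as [Hry Hry0].
  assert (H0 := reduced_orbit_start_unique A' B' a b A'_continuous B'_continuous
                  reduced_weight_sign reduced_weight_nonzero _ _ Hrx Hry Hrx0 Hry0).
  unfold reduce in H0. rewrite I_0, Ropp_0, exp_0, !Rmult_1_r in H0.
  apply (is_sol_unique A B C); auto; [apply Hx | apply Hy].
Qed.

Lemma periodic_orbit_hyperbolic x :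
  periodic_orbit A B C x -> nonzero_on01 x -> hyperbolic A B C (x 0).
Proof.
  intros Hx Hnx.
  destruct (reduce_periodic_orbit x Hx Hnx) as [Hrx Hrx0].
  assert (Hcx := is_sol_continuous A B C x (proj1 Hx)).
  eexists. split; [apply is_derive_poincare, Hx; auto|].
  intros Hexp.
  assert (Hk : RInt (fun s => 3 * A s * x s ^ 2 + 2 * B s * x s + C s) 0 1 = 0)
    by (apply exp_inv; rewrite exp_0; exact Hexp).
  apply (RInt_hyperbolicity_neq_0 A' B' a b A'_continuous B'_continuous
           reduced_weight_sign reduced_weight_nonzero _ Hrx Hrx0).
  assert (Hcr : forall t, 0 <= t <= 1 ->
            continuous (fun t => 3 * A' t * reduce x t ^ 2 + 2 * B' t * reduce x t) t).
  { intros t Ht. pose proof (Hcx t Ht). pose proof (I_continuous t). unfold reduce. continuity_R. }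
  rewrite (RInt_ext_on01 _ (fun t => (3 * A' t * reduce x t ^ 2 + 2 * B' t * reduce x t) + C t)),
    RInt_Rplus, C_mean_zero in Hk.
  - lra.
  - apply ex_RInt_on01; auto; lra.
  - apply ex_RInt_on01; auto; lra.
  - intros t Ht. unfold A', B', reduce. rewrite exp_Ropp. pose proof (exp_pos (I t)). field. lra.
Qed.

End PeriodicOrbits.

Lemma smooth_continuous (f : R -> R) : smooth f -> forall t, continuous f t.
Proof. intros Hf t. apply (ex_derive_continuous (V := R_NormedModule)), (Hf 1%nat t). Qed.

Theorem theorem5p1 (A B C : R -> R) :
  smooth A -> smooth B -> smooth C ->
  RInt C 0 1 = 0 ->
  (exists a b : R,
     (exists t, 0 <= t <= 1 /\ a * A t * exp (RInt C 0 t) + b * B t <> 0) /\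
     ((forall t, 0 <= t <= 1 -> 0 <= a * A t * exp (RInt C 0 t) + b * B t) \/
      (forall t, 0 <= t <= 1 -> a * A t * exp (RInt C 0 t) + b * B t <= 0))) ->
  (forall x y : R -> R,
     periodic_orbit A B C x -> nonzero_on01 x ->
     periodic_orbit A B C y -> nonzero_on01 y ->
     forall t, 0 <= t <= 1 -> x t = y t) /\
  (forall x : R -> R,
     periodic_orbit A B C x -> nonzero_on01 x -> hyperbolic A B C (x 0)).
Proof.
  intros SA SB SC HC0 [a [b [Hnonzero Hsign]]].
  pose proof (smooth_continuous A SA). pose proof (smooth_continuous B SB).
  pose proof (smooth_continuous C SC).
  split.
  - intros x y. apply (periodic_orbit_unique A B C a b); auto.
  - intros x. apply (periodic_orbit_hyperbolic A B C a b); auto.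
Qed.
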